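(* Let $S=K[x_1,\ldots,x_n]$ and $A\subseteq sm(S)_2$. Then (1) $A$ is upper perfect if and only if $\omega(\overline{\tau(A)})\le 2$, where $\overline{\tau(A)}$ is the complement graph of $\tau(A)$ and $\omega$ denotes the clique number; (2) $A$ is lower perfect if and only if for each $i\in[n]$, the degree of $v_i$ in $\overline{\tau(A)}$ is less than $n-1$.
   Context: $K$ is a field and $sm(S)_d$ is the set of square-free monomials of degree $d$ in $S$. For $A\subseteq sm(S)_2$: $A$ is upper perfect if $\{gx_i\mid g\in A,\ x_i\nmid g\}=sm(S)_3$, and lower perfect if $\{h\ne 1\mid h=g/x_i \text{ for some } g\in A,\ x_i\mid g\}=sm(S)_1$. $\tau(A)$ is the graph with vertex set $\{v_1,\ldots,v_n\}$ in which $v_iv_j$ is an edge if and only if $x_ix_j\in A$. *)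

From mathcomp Require Import all_boot.
Set Implicit Arguments. Unset Strict Implicit. Unset Printing Implicit Defensive.

(* Square-free monomials of S = K[x_1,...,x_n] are encoded by their supports:
   the square-free monomial x_{i_1}...x_{i_d} (i_1 < ... < i_d) is the set
   {i_1,...,i_d} : {set 'I_n}.  Variables x_1..x_n are indexed by 'I_n.
   Under this encoding: deg = cardinality, x_i | g <-> i \in g,
   g * x_i <-> g :|: [set i], g / x_i <-> g :\ i, and 1 <-> set0. *)

Definition sm (n d : nat) : {set {set 'I_n}} := [set g : {set 'I_n} | #|g| == d].

Definition upper_perfect (n : nat) (A : {set {set 'I_n}}) : Prop :=
  [set g :|: [set i] | g in A, i in ~: g] = sm n 3.

Definition lower_perfect (n : nat) (A : {set {set 'I_n}}) : Prop :=
  [set h in [set g :\ i | g in A, i in g] | h != set0] = sm n 1.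

Definition tau (n : nat) (A : {set {set 'I_n}}) : rel 'I_n :=
  fun i j => (i != j) && ([set i; j] \in A).

Definition compl_graph (n : nat) (G : rel 'I_n) : rel 'I_n :=
  fun i j => (i != j) && ~~ G i j.

Definition is_clique (n : nat) (G : rel 'I_n) (C : {set 'I_n}) : bool :=
  [forall i in C, forall j in C, (i != j) ==> G i j].

Definition clique_number (n : nat) (G : rel 'I_n) : nat :=
  \max_(C : {set 'I_n} | is_clique G C) #|C|.

Definition degree (n : nat) (G : rel 'I_n) (i : 'I_n) : nat :=
  #|[set j | G i j]|.

From mathcomp Require Import all_boot.

Set Implicit Arguments.
Unset Strict Implicit.
Unset Printing Implicit Defensive.

(* A square-free cubic monomial is a multiple g x_i of some g in A exactly when
   its support contains a pair {i, j} with x_i x_j in A, i.e. when it is not a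
   triangle of the complement of tau(A); so A is upper perfect iff that
   complement has no triangle.  Likewise x_j is a quotient g / x_i of some
   g in A exactly when v_j has a neighbour in tau(A), i.e. when its degree in
   the complement is below n - 1. *)

Section ComplementGraph.

Variable n : nat.
Implicit Types (G : rel 'I_n) (C D : {set 'I_n}).

Lemma clique_subset G C D : D \subset C -> is_clique G C -> is_clique G D.
Proof.
move=> /subsetP sDC /forall_inP cliqueC; apply/forall_inP => i /sDC iC.
by apply/forall_inP => j /sDC jC; have /forall_inP := cliqueC i iC; apply.
Qed.

Lemma clique_number_leqP G k :
  reflect (forall C, #|C| = k.+1 -> ~~ is_clique G C) (clique_number G <= k).
Proof.
apply: (iffP (bigmax_leqP (is_clique G) _ _)) => [le_k C cardC | no_clique C cliqueC].
  by apply/negP => /le_k; rewrite cardC ltnn.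
rewrite leqNgt; apply/negP => ltkC.
have : 0 < #|[set D : {set 'I_n} | D \subset C & #|D| == k.+1]| by rewrite cards_draws bin_gt0.
case/card_gt0P => D; rewrite inE => /andP [sDC /eqP cardD].
by have /negP := no_clique D cardD; apply; apply: clique_subset cliqueC.
Qed.

Lemma not_clique_compl G C :
  ~~ is_clique (compl_graph G) C = [exists x in C, exists y in C, (x != y) && G x y].
Proof.
rewrite /is_clique negb_forall_in; apply: eq_existsb => x; congr (_ && _).
rewrite negb_forall_in; apply: eq_existsb => y; congr (_ && _).
by rewrite /compl_graph; case: (x != y); rewrite ?negbK.
Qed.

Lemma degree_compl_lt G j :
  (degree (compl_graph G) j < n - 1) = [exists k, (j != k) && G j k].
Proof.
have sub : [set k | compl_graph G j k] \subset [set~ j].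
  by apply/subsetP => k; rewrite !inE eq_sym => /andP [].
have card_nj : #|[set~ j]| = n - 1 by rewrite cardsC1 card_ord subn1.
rewrite /degree -card_nj.
rewrite (ltn_leqif (subset_leqif_cards sub)) eqEsubset sub /=.
apply/subsetPn/existsP => [[k] | [k /andP [jk Gjk]]].
  rewrite !inE /compl_graph negb_and !negbK => kj /orP [/eqP jk | Gjk].
    by rewrite jk eqxx in kj.
  by exists k; rewrite eq_sym kj.
by exists k; rewrite !inE /compl_graph 1?eq_sym // Gjk andbF.
Qed.

End ComplementGraph.

Definition upper_shadow (n : nat) (A : {set {set 'I_n}}) : {set {set 'I_n}} :=
  [set g :|: [set i] | g in A, i in ~: g].

Definition lower_shadow (n : nat) (A : {set {set 'I_n}}) : {set {set 'I_n}} :=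
  [set g :\ i | g in A, i in g].

Section QuadraticMonomials.

Variables (n : nat) (A : {set {set 'I_n}}).
Hypothesis A2 : A \subset sm n 2.

Lemma pair_of_mem g j : g \in A -> j \in g -> exists2 k, j != k & g = [set j; k].
Proof.
move=> /(subsetP A2); rewrite inE (cardsD1 j) => /[swap] jg; rewrite jg.
case/cards1P => k gDj; have : k \in g :\ j by rewrite gDj set11.
by rewrite !inE eq_sym => /andP [jk _]; exists k; rewrite // -(setD1K jg) gDj.
Qed.

Lemma not_clique_compl_tau C :
  ~~ is_clique (compl_graph (tau A)) C = [exists g in A, g \subset C].
Proof.
rewrite not_clique_compl; apply/existsP/existsP => [[x] | [g /andP [gA sgC]]].
  case/andP=> xC /exists_inP [y yC /andP [_ /andP [xy xyA]]].
  by exists [set x; y]; rewrite xyA subUset !sub1set xC.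
have := subsetP A2 g gA; rewrite inE => /cards2P [x [y [xy def_g]]].
have /subsetP := sgC; rewrite def_g => sxyC.
exists x; rewrite sxyC ?set21 //=; apply/exists_inP; exists y; rewrite ?sxyC ?set22 //.
by rewrite /tau xy -def_g gA.
Qed.

Lemma degree_compl_tau_lt j :
  (degree (compl_graph (tau A)) j < n - 1) = [exists g in A, j \in g].
Proof.
rewrite degree_compl_lt; apply/existsP/exists_inP => [[k] | [g gA jg]].
  by case/andP=> _ /andP [_ jkA]; exists [set j; k]; rewrite ?set21.
by have [k jk def_g] := pair_of_mem gA jg; exists k; rewrite /tau jk -def_g gA.
Qed.

Lemma upper_shadow_sub : upper_shadow A \subset sm n 3.
Proof.
apply/subsetP => T /imset2P [g i gA]; rewrite inE => ig ->.
have := subsetP A2 g gA; rewrite !inE => /eqP g2.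
by rewrite setUC cardsU1 g2 ig.
Qed.

Lemma mem_upper_shadow (T : {set 'I_n}) :
  #|T| = 3 -> (T \in upper_shadow A) = [exists g in A, g \subset T].
Proof.
move=> T3; apply/imset2P/exists_inP => [[g i gA _ ->] | [g gA sgT]].
  by exists g; rewrite ?subsetUl.
have g2 : #|g| = 2 by apply/eqP; have := subsetP A2 g gA; rewrite inE.
have /cards1P [i TDg] : #|T :\: g| == 1.
  by rewrite cardsD (setIidPr sgT) T3 g2.
have : i \in T :\: g by rewrite TDg set11.
rewrite inE => /andP [ig _]; exists g i; rewrite ?inE //.
by rewrite -TDg -{1}(setID T g) (setIidPr sgT).
Qed.

Lemma lower_shadow_sub : lower_shadow A \subset sm n 1.
Proof.
apply/subsetP => h /imset2P [g i gA ig ->].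
by have := subsetP A2 g gA; rewrite !inE (cardsD1 i) ig.
Qed.

Lemma mem_lower_shadow j : ([set j] \in lower_shadow A) = [exists g in A, j \in g].
Proof.
apply/imset2P/exists_inP => [[g i gA ig def_j] | [g gA jg]].
  by exists g; rewrite // (subsetP (subD1set g i)) // -def_j set11.
have [k jk def_g] := pair_of_mem gA jg.
exists g k; rewrite // def_g ?set22 //; apply/setP => x; rewrite !inE.
by case: (x =P j) => [-> | _] /=; [rewrite jk | case: (x == k)].
Qed.

Lemma upper_perfectE :
  upper_perfect A <-> forall T : {set 'I_n}, #|T| = 3 -> [exists g in A, g \subset T].
Proof.
rewrite /upper_perfect -/(upper_shadow A); split=> [shadowE T T3 | cover].
  by rewrite -mem_upper_shadow // shadowE inE T3.
apply/eqP; rewrite eqEsubset upper_shadow_sub; apply/subsetP => T.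
by rewrite inE => /eqP T3; rewrite mem_upper_shadow // cover.
Qed.

Lemma lower_perfectE : lower_perfect A <-> forall j : 'I_n, [exists g in A, j \in g].
Proof.
rewrite /lower_perfect -/(lower_shadow A); split=> [shadowE j | cover].
  have : [set j] \in sm n 1 by rewrite inE cards1.
  by rewrite -shadowE inE -mem_lower_shadow => /andP [].
apply/eqP; rewrite eqEsubset; apply/andP; split; apply/subsetP => h.
  by rewrite inE => /andP [/(subsetP lower_shadow_sub)].
rewrite !inE => /cards1P [j ->]; rewrite mem_lower_shadow cover /=.
by apply/set0Pn; exists j; rewrite set11.
Qed.

End QuadraticMonomials.

Theorem proposition4p3 (n : nat) (A : {set {set 'I_n}}) :
  A \subset sm n 2 ->
  (upper_perfect A <-> clique_number (compl_graph (tau A)) <= 2) /\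
  (lower_perfect A <-> forall i : 'I_n, degree (compl_graph (tau A)) i < n - 1).
Proof.
move=> A2; split.
  apply: iff_trans (upper_perfectE A2) _.
  split=> [cover | /clique_number_leqP no_triangle T T3].
    by apply/clique_number_leqP => C C3; rewrite not_clique_compl_tau // cover.
  by rewrite -not_clique_compl_tau // no_triangle.
apply: iff_trans (lower_perfectE A2) _.
split=> covered i; first by rewrite degree_compl_tau_lt.
by rewrite -degree_compl_tau_lt.
Qed.
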